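(* If $A\subset\mathbb{R}^d$ is a finite set in general position, then for all $k\in\mathbb{N}$, $\dim(\mathrm{Del}_{\infty,k})\le\binom{d+1}{\lfloor\frac{d+1}{2}\rfloor}$.
   Context: For $\tilde A\subseteq A$ with $|\tilde A|=k$, the order-$k$ Voronoi region is $\mathrm{Vor}(\tilde A)=\{b\in\mathbb{R}^d: \|b-\tilde a\|\le\|b-a\|\ \forall\tilde a\in\tilde A, a\in A\setminus\tilde A\}$, and $\mathrm{Ball}_r(\tilde A)=\{b: \|b-\tilde a\|\le r\ \forall\tilde a\in\tilde A\}$. The order-$k$ Delaunay complex $\mathrm{Del}_{r,k}$ is the nerve of $\{\mathrm{Ball}_r(\tilde A)\cap\mathrm{Vor}(\tilde A): |\tilde A|=k\}$, i.e. the simplicial complex whose simplices are sets of $k$-subsets $\tilde A$ whose sets $\mathrm{Ball}_r(\tilde A)\cap\mathrm{Vor}(\tilde A)$ have nonempty common intersection. $\mathrm{Del}_{\infty,k}$ denotes the largest of the complexes $\mathrm{Del}_{r,k}$, $r\ge0$ (equivalently, the nerve of the order-$k$ Voronoi regions). *)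

From HB Require Import structures.
From mathcomp Require Import all_boot all_order all_algebra.
From mathcomp Require Import finmap.
From mathcomp Require Import reals.
Set Implicit Arguments. Unset Strict Implicit. Unset Printing Implicit Defensive.
Import Order.TTheory GRing.Theory Num.Theory.
Local Open Scope ring_scope.
Local Open Scope fset_scope.

Section Defs.
Variables (R : realType) (d : nat).
Notation pt := 'rV[R]_d.

Definition enorm (x : pt) : R := Num.sqrt (\sum_(i < d) (x 0 i) ^+ 2).
Definition dotp (u x : pt) : R := \sum_(i < d) u 0 i * x 0 i.

Definition Vor (A At : {fset pt}) : pt -> Prop :=
  fun b => forall at_ a, at_ \in At -> a \in A -> a \notin At ->
    enorm (b - at_) <= enorm (b - a).

Definition Ball (r : R) (At : {fset pt}) : pt -> Prop :=
  fun b => forall at_, at_ \in At -> enorm (b - at_) <= r.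

Definition Del (A : {fset pt}) (r : R) (k : nat) (sigma : {fset {fset pt}}) : Prop :=
  sigma != fset0 /\
  (forall At, At \in sigma -> At `<=` A /\ #|` At| = k) /\
  exists b : pt, forall At, At \in sigma -> Ball r At b /\ Vor A At b.

Definition Del_inf (A : {fset pt}) (k : nat) (sigma : {fset {fset pt}}) : Prop :=
  sigma != fset0 /\
  (forall At, At \in sigma -> At `<=` A /\ #|` At| = k) /\
  exists b : pt, forall At, At \in sigma -> Vor A At b.

Definition Del_inf_dim_le (A : {fset pt}) (k n : nat) : Prop :=
  forall sigma, Del_inf A k sigma -> (#|` sigma| - 1 <= n)%N.

Definition general_position (A : {fset pt}) : Prop :=
  (forall S : {fset pt}, S `<=` A -> #|` S| = d.+1 ->
     ~ exists (u : pt) (beta : R), u != 0 /\ forall p, p \in S -> dotp u p = beta) /\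
  (forall S : {fset pt}, S `<=` A -> #|` S| = d.+2 ->
     ~ exists (c : pt) (rho : R), forall p, p \in S -> enorm (p - c) = rho).
End Defs.

From HB Require Import structures.
From mathcomp Require Import all_boot all_order all_algebra.
From mathcomp Require Import finmap.
From mathcomp Require Import reals.
From mathcomp Require Import zify.
Set Implicit Arguments. Unset Strict Implicit. Unset Printing Implicit Defensive.
Import Order.TTheory GRing.Theory.
Local Open Scope fset_scope.

(* Let [b] lie in the Voronoi regions of all members of a simplex [sigma], let
   [I] be the points common to all members and [D] those lying in some but not
   all of them.  For [x] in [At] and [y] outside [At'], the Voronoi inequality
   of [At] at [b] gives [|b - x| <= |b - y|], possibly through a point of
   [At' `\` At] when [y] is in [At]; so [D] lies on a sphere about [b] and
   general position gives [#|D| <= d + 1].  Each member of [sigma] is [I] plus a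
   [(k - #|I|)]-subset of [D], whence [#|sigma| <= 'C(d + 1, k - #|I|)], and
   binomial coefficients peak in the middle. *)

Lemma leq_bin_succ n j : j < n./2 -> 'C(n, j) <= 'C(n, j.+1).
Proof.
move=> lt_j_half; rewrite -(@leq_pmul2l j.+1) // mul_bin_left leq_mul2r.
have := odd_double_half n; rewrite -addnn; case: (odd n) => /= n_eq; lia.
Qed.

Lemma leq_bin_half n j : 'C(n, j) <= 'C(n, n./2).
Proof.
have bin_homo : {in [pred i | i <= n./2] &, {homo binomial n : i1 i2 / i1 <= i2 >-> i1 <= i2}}.
  apply: homo_leq_in => [//|? ? ?|i1 i2 _|i]; first exact: leq_trans.
    by rewrite !inE => le_i2_half i /andP[_ /ltnW /leq_trans]; apply.
  by rewrite !inE => _; apply: leq_bin_succ.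
have n_eq := odd_double_half n; rewrite -addnn in n_eq.
have [le_j_half | lt_half_j] := leqP j n./2; first by apply: bin_homo; rewrite ?inE.
have [le_j_n | lt_n_j] := leqP j n; last by rewrite bin_small.
rewrite -bin_sub //; apply: bin_homo; rewrite ?inE //; case: (odd n) n_eq; lia.
Qed.

Lemma exists_fsetD_card_eq (T : choiceType) (S1 S2 : {fset T}) y :
  #|` S1| = #|` S2| -> y \in S1 -> y \notin S2 -> exists2 z, z \in S2 & z \notin S1.
Proof.
move=> card_eq yS1 yS2.
have : 0 < #|` S2 `\` S1|.
  rewrite cardfsD -card_eq fsetIC -cardfsD cardfs_gt0; apply/fset0Pn.
  by exists y; rewrite inE yS1 yS2.
by rewrite cardfs_gt0 => /fset0Pn [z]; rewrite inE => /andP [zS1 zS2]; exists z.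
Qed.

Section UniformFamily.
Variables (T : choiceType) (F : {fset {fset T}}).

Definition common_part : {fset T} :=
  [fset x in \bigcup_(S <- F) S | all (fun S : {fset T} => x \in S) F].

Definition varying_part : {fset T} := \bigcup_(S <- F) S `\` common_part.

Lemma common_part_sub S : S \in F -> common_part `<=` S.
Proof. by move=> SF; apply/fsubsetP => x; rewrite inE => /andP[_ /allP]; apply. Qed.

Lemma varying_partP x :
  reflect ((exists2 S, S \in F & x \in S) /\ (exists2 S, S \in F & x \notin S))
          (x \in varying_part).
Proof.
rewrite !inE; apply: (iffP andP) =>
    [[xNc /bigfcupP[S /andP[SF _] xS]] | [[S SF xS] [S' S'F xS']]].
  split; first by exists S.
  move: xNc; rewrite (_ : x \in _ = true) /=; last by apply/bigfcupP; exists S; rewrite ?SF.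
  by case/allPn=> S' S'F xS'; exists S'.
have xU : x \in \bigcup_(S <- F) S by apply/bigfcupP; exists S; rewrite ?SF.
by rewrite xU; split=> //; apply/allPn; exists S'.
Qed.

Lemma fsetD_common_part_sub S : S \in F -> S `\` common_part `<=` varying_part.
Proof. by move=> SF; apply/fsetSD/bigfcup_sup. Qed.

Lemma card_uniform_family_le m :
  (forall S, S \in F -> #|` S| = m) ->
  #|` F| <= 'C(#|` varying_part|, m - #|` common_part|).
Proof.
move=> cardF; set D := varying_part; set I := common_part.
pose trace S : {set D} := fsub D (S `\` I).
have trace_inj : {in F &, injective trace}.
  move=> S1 S2 S1F S2F /fsub_inj eq_trace.
  have {}eq_trace : S1 `\` I = S2 `\` I by apply: eq_trace; rewrite inE fsetD_common_part_sub.
  apply/fsetP => x; have [xI | xNI] := boolP (x \in I).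
    by rewrite !(fsubsetP (common_part_sub _) x xI).
  by have := congr1 (fun S => x \in S) eq_trace; rewrite /= !in_fsetD xNI.
rewrite -(card_fsub (fsubset_refl D)) fsubT -cards_draws cardE -(size_map trace).
apply: uniq_leq_size; first by rewrite map_inj_in_uniq ?fset_uniq.
move=> _ /mapP[S SF ->]; rewrite mem_enum inE subsetT /=.
by rewrite card_fsub ?fsetD_common_part_sub // cardfsDS ?common_part_sub // cardF.
Qed.

End UniformFamily.

Local Open Scope ring_scope.

Section Delaunay.
Variables (R : realType) (d : nat).
Notation pt := 'rV[R]_d.

Definition no_cospherical (A : {fset pt}) : Prop :=
  forall S : {fset pt}, S `<=` A -> #|` S| = d.+2 ->
    ~ exists (c : pt) (rho : R), forall p, p \in S -> enorm (p - c) = rho.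

Lemma enormB (x y : pt) : enorm (x - y) = enorm (y - x).
Proof. by congr Num.sqrt; apply: eq_bigr => i _; rewrite !mxE -sqrrN opprB. Qed.

Lemma card_cospherical_le (A S : {fset pt}) (c : pt) (rho : R) :
  no_cospherical A -> S `<=` A -> (forall p, p \in S -> enorm (p - c) = rho) ->
  (#|` S| <= d.+1)%N.
Proof.
move=> A_no_cospherical SA Ssphere; rewrite leqNgt; apply/negP => large_S.
pose s := take d.+2 S.
have sS x : x \in s -> x \in S by move/mem_take.
apply: (A_no_cospherical [fset x in s]).
- by apply/fsubsetP => x; rewrite inE => /sS /(fsubsetP SA).
- by rewrite card_fseq undup_id ?size_takel // take_uniq ?fset_uniq.
by exists c, rho => p; rewrite inE => /sS; apply: Ssphere.
Qed.

Variables (A : {fset pt}) (k : nat) (sigma : {fset {fset pt}}) (b : pt).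
Hypothesis sigma_sub : forall At, At \in sigma -> At `<=` A /\ #|` At| = k.
Hypothesis sigma_Vor : forall At, At \in sigma -> Vor A At b.

Lemma varying_part_sub : varying_part sigma `<=` A.
Proof.
apply/fsubsetP => x /varying_partP[[At Atsigma xAt] _].
by have [/fsubsetP AtA _] := sigma_sub Atsigma; apply: AtA.
Qed.

Lemma varying_part_dist_le x y :
  x \in varying_part sigma -> y \in varying_part sigma -> enorm (b - x) <= enorm (b - y).
Proof.
move=> /varying_partP[[At Atsigma xAt] _] yD.
have yA := fsubsetP varying_part_sub y yD.
case/varying_partP: yD => _ [At' At'sigma yNAt'].
have [_ cardAt] := sigma_sub Atsigma; have [/fsubsetP At'A cardAt'] := sigma_sub At'sigma.
have [yAt | yNAt] := boolP (y \in At); last exact: (sigma_Vor Atsigma xAt yA yNAt).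
have [z zAt' zNAt] := exists_fsetD_card_eq (etrans cardAt (esym cardAt')) yAt yNAt'.
apply: le_trans (sigma_Vor Atsigma xAt (At'A z zAt') zNAt) _.
exact: (sigma_Vor At'sigma zAt' yA yNAt').
Qed.

Lemma card_varying_part_le :
  no_cospherical A -> (#|` varying_part sigma| <= d.+1)%N.
Proof.
move=> A_no_cospherical; have [-> | [x0 x0D]] := fset_0Vmem (varying_part sigma).
  by rewrite cardfs0.
apply: (card_cospherical_le (c := b) (rho := enorm (x0 - b)) A_no_cospherical).
  exact: varying_part_sub.
by move=> p pD; rewrite enormB [RHS]enormB; apply/le_anti; rewrite !varying_part_dist_le.
Qed.

End Delaunay.

Theorem lemma13 (R : realType) (d : nat) (A : {fset 'rV[R]_d}) :
  general_position A ->
  forall k : nat, Del_inf_dim_le A k 'C(d.+1, (d.+1)./2).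
Proof.
move=> [_ A_no_cospherical] k sigma [_ [sigma_sub [b sigma_Vor]]].
apply: leq_trans (leq_subr 1 _) _.
apply: leq_trans (card_uniform_family_le (fun At AtS => (sigma_sub At AtS).2)) _.
apply: leq_trans (leq_bin2l _ (card_varying_part_le sigma_sub sigma_Vor A_no_cospherical)) _.
exact: leq_bin_half.
Qed.
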